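(* Let $\mathbf{C}\in\mathbb{R}^{n\times n}$, $\mathbf{c}\in\mathbb{R}^n$, and consider the linear system $\mathbf{C}\mathbf{x}=\mathbf{c}$. Let $\langle\cdot,\cdot\rangle_1$, $\langle\cdot,\cdot\rangle_2$ be two inner products on $\mathbb{R}^n$ with norms $\|\cdot\|_1,\|\cdot\|_2$, and constants $0<\underline{\gamma}\le\overline{\gamma}$ with $\underline{\gamma}\|\mathbf{x}\|_1\le\|\mathbf{x}\|_2\le\overline{\gamma}\|\mathbf{x}\|_1$ for all $\mathbf{x}\in\mathbb{R}^n$. Fix an initial guess $\mathbf{x}^0$ with residual $\mathbf{r}^0=\mathbf{c}-\mathbf{C}\mathbf{x}^0$, and for $p=1,2$ and $m\ge0$ let $\mathbf{x}^m_p\in\mathbf{x}^0+\mathrm{span}\{\mathbf{r}^0,\mathbf{C}\mathbf{r}^0,\dots,\mathbf{C}^{m-1}\mathbf{r}^0\}$ minimise the residual norm $\|\mathbf{c}-\mathbf{C}\mathbf{x}\|_p$ over this affine Krylov space, with residual $\mathbf{r}^m_p=\mathbf{c}-\mathbf{C}\mathbf{x}^m_p$. Suppose that for some $0<\sigma<1$, $\|\mathbf{r}^m_1\|_1\le\sigma^m\|\mathbf{r}^0\|_1$ for all $m\ge0$. Then for all $m\ge0$, $$\|\mathbf{r}^{m+\Delta m}_2\|_2\le\sigma^m\|\mathbf{r}^0\|_2\quad\text{for all integers }\Delta m\ge\frac{\log(\overline{\gamma}/\underline{\gamma})}{\log(\sigma^{-1})}.$$ *)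

From HB Require Import structures.
From mathcomp Require Import all_boot all_order all_algebra.
From mathcomp Require Import all_classical all_reals.
From mathcomp Require Import exp.
Set Implicit Arguments. Unset Strict Implicit. Unset Printing Implicit Defensive.
Import Order.TTheory GRing.Theory Num.Theory.
Local Open Scope ring_scope.

Definition is_inner_product (R : realType) (n : nat)
    (ip : 'cV[R]_n -> 'cV[R]_n -> R) : Prop :=
  [/\ (forall x y, ip x y = ip y x),
      (forall (a : R) x y z, ip (a *: x + y) z = a * ip x z + ip y z)
    & (forall x, x != 0 -> 0 < ip x x)].

Definition ipnorm (R : realType) (n : nat)
    (ip : 'cV[R]_n -> 'cV[R]_n -> R) (x : 'cV[R]_n) : R :=
  Num.sqrt (ip x x).

Definition in_affine_krylov (R : realType) (n : nat) (C : 'M[R]_n)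
    (x0 r0 : 'cV[R]_n) (m : nat) (x : 'cV[R]_n) : Prop :=
  exists a : 'I_m -> R,
    x = x0 + \sum_(i < m) a i *: iter i (fun v => C *m v) r0.

Definition is_minres_iterate (R : realType) (n : nat)
    (ip : 'cV[R]_n -> 'cV[R]_n -> R) (C : 'M[R]_n) (c x0 : 'cV[R]_n)
    (m : nat) (x : 'cV[R]_n) : Prop :=
  in_affine_krylov C x0 (c - C *m x0) m x /\
  forall y, in_affine_krylov C x0 (c - C *m x0) m y ->
    ipnorm ip (c - C *m x) <= ipnorm ip (c - C *m y).

From HB Require Import structures.
From mathcomp Require Import all_boot all_order all_algebra.
From mathcomp Require Import all_classical all_reals.
From mathcomp Require Import exp.
From mathcomp Require Import ring.
Set Implicit Arguments. Unset Strict Implicit. Unset Printing Implicit Defensive.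
Import Order.TTheory GRing.Theory Num.Theory.
Local Open Scope ring_scope.

(* The 2-minimal residual is no larger than the 2-norm of the 1-minimal
   residual, which is at most gu times its 1-norm; the assumed 1-norm decay and
   ||r0||_1 <= ||r0||_2 / gl then give ||r^(m+dm)_2||_2 <= (gu/gl) sigma^dm
   sigma^m ||r0||_2, and the lower bound on dm is exactly (gu/gl) sigma^dm <= 1. *)

Lemma ipnorm_ge0 (R : realType) (n : nat) (ip : 'cV[R]_n -> 'cV[R]_n -> R)
    (x : 'cV[R]_n) : 0 <= ipnorm ip x.
Proof. exact: sqrtr_ge0. Qed.

Lemma minres_residual_le (R : realType) (n : nat)
    (ip ip' : 'cV[R]_n -> 'cV[R]_n -> R) (C : 'M[R]_n) (c x0 : 'cV[R]_n)
    (m : nat) (x y : 'cV[R]_n) :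
  is_minres_iterate ip C c x0 m x -> is_minres_iterate ip' C c x0 m y ->
  ipnorm ip (c - C *m x) <= ipnorm ip (c - C *m y).
Proof. by move=> [_ x_min] [y_krylov _]; exact: x_min. Qed.

Lemma mul_expr_le1_of_ln_ratio (R : realType) (K s : R) (d : nat) :
  0 < K -> 0 < s -> s < 1 -> ln K / ln s^-1 <= d%:R -> K * s ^+ d <= 1.
Proof.
move=> K_gt0 s_gt0 s_lt1 d_ge.
have ln_sV_gt0 : 0 < ln s^-1 by rewrite ln_gt0 // invf_gt1.
have K_le : K <= s^-1 ^+ d.
  rewrite -ler_ln ?posrE ?exprn_gt0 ?invr_gt0 // lnXn ?invr_gt0 //.
  by rewrite -mulr_natl -ler_pdivrMr.
by rewrite -ler_pdivlMr ?exprn_gt0 // div1r -exprVn.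
Qed.

Section NormEquivalence.
Variables (R : realFieldType) (V : Type) (N1 N2 : V -> R) (gl gu : R).
Hypothesis gl_gt0 : 0 < gl.
Hypothesis gl_le_gu : gl <= gu.
Hypothesis N2_ge0 : forall x, 0 <= N2 x.
Hypothesis N1_N2 : forall x, gl * N1 x <= N2 x /\ N2 x <= gu * N1 x.

Lemma equiv_norm_decay_shift (sigma : R) (m dm : nat) (r r0 : V) :
  0 <= sigma -> gu / gl * sigma ^+ dm <= 1 ->
  N1 r <= sigma ^+ (m + dm) * N1 r0 -> N2 r <= sigma ^+ m * N2 r0.
Proof.
move=> sigma_ge0 shift_le1 N1_decay.
have gu_ge0 : 0 <= gu by apply: ltW; apply: lt_le_trans gl_le_gu.
have N1_r0_le : N1 r0 <= N2 r0 / gl by rewrite ler_pdivlMr // mulrC; case: (N1_N2 r0).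
have N2_r_le : N2 r <= gu * sigma ^+ (m + dm) * (N2 r0 / gl).
  apply: le_trans (N1_N2 r).2 _; rewrite -mulrA ler_wpM2l //.
  by apply: le_trans N1_decay _; rewrite ler_wpM2l ?exprn_ge0.
apply: le_trans N2_r_le _.
have -> : gu * sigma ^+ (m + dm) * (N2 r0 / gl) =
          gu / gl * sigma ^+ dm * (sigma ^+ m * N2 r0).
  by rewrite exprD; ring.
by rewrite -[leRHS]mul1r ler_wpM2r ?mulr_ge0 ?exprn_ge0.
Qed.

End NormEquivalence.

Theorem lemma4p3 (R : realType) (n : nat) (C : 'M[R]_n) (c x0 : 'cV[R]_n)
    (ip1 ip2 : 'cV[R]_n -> 'cV[R]_n -> R) (gl gu sigma : R)
    (xs1 xs2 : nat -> 'cV[R]_n) :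
  is_inner_product ip1 -> is_inner_product ip2 ->
  0 < gl -> gl <= gu ->
  (forall x, gl * ipnorm ip1 x <= ipnorm ip2 x /\
             ipnorm ip2 x <= gu * ipnorm ip1 x) ->
  (forall m, is_minres_iterate ip1 C c x0 m (xs1 m)) ->
  (forall m, is_minres_iterate ip2 C c x0 m (xs2 m)) ->
  0 < sigma -> sigma < 1 ->
  (forall m, ipnorm ip1 (c - C *m xs1 m) <= sigma ^+ m * ipnorm ip1 (c - C *m x0)) ->
  forall m dm : nat, ln (gu / gl) / ln (sigma^-1) <= dm%:R ->
    ipnorm ip2 (c - C *m xs2 (m + dm)%N) <= sigma ^+ m * ipnorm ip2 (c - C *m x0).
Proof.
move=> _ _ gl_gt0 gl_le_gu N1_N2 xs1_min xs2_min sigma_gt0 sigma_lt1 decay1 m dm dm_ge.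
have ratio_gt0 : 0 < gu / gl by rewrite divr_gt0 // (lt_le_trans gl_gt0).
have shift_le1 : gu / gl * sigma ^+ dm <= 1 by exact: mul_expr_le1_of_ln_ratio.
apply: (le_trans (minres_residual_le (xs2_min (m + dm)%N) (xs1_min (m + dm)%N))).
exact: (equiv_norm_decay_shift gl_gt0 gl_le_gu (@ipnorm_ge0 _ _ ip2) N1_N2
          (ltW sigma_gt0) shift_le1 (decay1 (m + dm)%N)).
Qed.
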